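(* Let $(X,d)$ be a complete metric space, let $F:(0,\infty)\to\mathbb{R}$ have a finite right limit $\lim_{s\to t^+}F(s)$ at every point $t>0$, and let $\varphi:(0,\infty)\to(0,\infty)$ satisfy: for every $t>0$ and every sequence $(t_n)\subset(t,\infty)$ with $t_n\to t$, $\limsup_{n\to\infty}\varphi(t_n)>0$. Let $T:X\to X$ be contractive and such that for all $x,y\in X$ with $Tx\neq Ty$, $$\varphi(d(x,y))+F(d(Tx,Ty))\le F(d(x,y)).$$ Then $T$ is a CJMP-contraction.
   Context: $T$ is contractive if $d(Tx,Ty)<d(x,y)$ for all $x\neq y$. $T$ is a CJMP-contraction if it is contractive and for every $\varepsilon>0$ there exists $\delta>0$ such that for all $x,y\in X$, $\varepsilon<d(x,y)<\varepsilon+\delta$ implies $d(Tx,Ty)\le\varepsilon$. *)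

From Stdlib Require Import Reals.
From Coquelicot Require Import Coquelicot.
Open Scope R_scope.

Definition is_metric {X : Type} (d : X -> X -> R) : Prop :=
  (forall x y, 0 <= d x y) /\
  (forall x y, d x y = 0 <-> x = y) /\
  (forall x y, d x y = d y x) /\
  (forall x y z, d x z <= d x y + d y z).

Definition cauchy_seq {X : Type} (d : X -> X -> R) (u : nat -> X) : Prop :=
  forall eps, 0 < eps -> exists N : nat, forall m n, (N <= m)%nat -> (N <= n)%nat ->
    d (u m) (u n) < eps.

Definition converges_to {X : Type} (d : X -> X -> R) (u : nat -> X) (l : X) : Prop :=
  forall eps, 0 < eps -> exists N : nat, forall n, (N <= n)%nat -> d (u n) l < eps.

Definition complete_metric {X : Type} (d : X -> X -> R) : Prop :=
  forall u : nat -> X, cauchy_seq d u -> exists l, converges_to d u l.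

Definition contractive {X : Type} (d : X -> X -> R) (T : X -> X) : Prop :=
  forall x y, x <> y -> d (T x) (T y) < d x y.

Definition CJMP_contraction {X : Type} (d : X -> X -> R) (T : X -> X) : Prop :=
  contractive d T /\
  forall eps, 0 < eps -> exists delta, 0 < delta /\
    forall x y, eps < d x y -> d x y < eps + delta -> d (T x) (T y) <= eps.

From Stdlib Require Import Reals Lra Classical ClassicalEpsilon.
From Coquelicot Require Import Coquelicot.
Open Scope R_scope.

(* If T were not a CJMP-contraction at some level eps, there would be pairs
   (x_n, y_n) with d(x_n, y_n) -> eps and eps < d(Tx_n, Ty_n) <
   d(x_n, y_n).  Both distances then tend to eps from the right, so the
   finite right limit of F at eps forces F(d(x_n,y_n)) - F(d(Tx_n,Ty_n)) -> 0;
   this bounds phi(d(x_n,y_n)) and makes its limsup 0, against the hypothesis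
   on phi. *)

Lemma is_lim_seq_inv_S : is_lim_seq (fun n => / INR (S n)) 0.
Proof.
  apply (is_lim_seq_incr_1 (fun n => / INR n)).
  exact (is_lim_seq_inv _ _ is_lim_seq_INR ltac:(discriminate)).
Qed.

Lemma filterlim_seq_at_right (u : nat -> R) (t : R) :
  is_lim_seq u t -> (forall n, t < u n) -> filterlim u eventually (at_right t).
Proof.
  intros Hu Hgt P HP.
  change (eventually (fun n => P (u n))).
  apply (filter_imp (fun n => t < u n -> P (u n))); [auto|].
  exact (Hu _ HP).
Qed.

Lemma is_lim_seq_diff_at_right (F : R -> R) (t L : R) (u v : nat -> R) :
  filterlim F (at_right t) (locally L) ->
  is_lim_seq u t -> (forall n, t < u n) ->
  is_lim_seq v t -> (forall n, t < v n) ->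
  is_lim_seq (fun n => F (u n) - F (v n)) 0.
Proof.
  intros HF Hu Hut Hv Hvt.
  replace 0 with (L - L) by ring.
  apply is_lim_seq_minus'.
  - exact (filterlim_comp _ _ _ _ _ _ _ _ (filterlim_seq_at_right u t Hu Hut) HF).
  - exact (filterlim_comp _ _ _ _ _ _ _ _ (filterlim_seq_at_right v t Hv Hvt) HF).
Qed.

Lemma LimSup_seq_le_lim (u v : nat -> R) (l : R) :
  (forall n, u n <= v n) -> is_lim_seq v l -> Rbar_le (LimSup_seq u) l.
Proof.
  intros Huv Hv.
  rewrite <- (is_LimSup_seq_unique _ _ (is_lim_LimSup_seq _ _ Hv)).
  apply LimSup_le.
  exists 0%nat; auto.
Qed.

Section CJMPFailure.

Variables (X : Type) (d : X -> X -> R) (T : X -> X).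
Hypothesis d_metric : is_metric d.
Hypothesis T_contractive : contractive d T.

Lemma dist_pos_neq (x y : X) : 0 < d x y -> x <> y.
Proof.
  intros Hxy ->.
  destruct d_metric as (_ & d_eq0 & _).
  rewrite (proj2 (d_eq0 y y) eq_refl) in Hxy; lra.
Qed.

Lemma not_CJMP_at_seq (eps : R) : 0 < eps ->
  ~ (exists delta, 0 < delta /\
       forall x y, eps < d x y -> d x y < eps + delta -> d (T x) (T y) <= eps) ->
  exists x y : nat -> X,
    is_lim_seq (fun n => d (x n) (y n)) eps /\
    forall n, eps < d (T (x n)) (T (y n)) < d (x n) (y n).
Proof.
  intros Heps Hno.
  assert (Hwitness : forall n, exists p : X * X,
    eps < d (fst p) (snd p) < eps + / INR (S n) /\ eps < d (T (fst p)) (T (snd p))).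
  { intro n; apply NNPP; intro Hn; apply Hno.
    exists (/ INR (S n)); split.
    - apply Rinv_0_lt_compat, lt_0_INR, Nat.lt_0_succ.
    - intros x y H1 H2; apply Rnot_lt_le; intro H3.
      apply Hn; exists (x, y); auto. }
  destruct (choice _ Hwitness) as [p Hp].
  exists (fun n => fst (p n)), (fun n => snd (p n)); split.
  - apply (is_lim_seq_le_le (fun _ => eps) _ (fun n => eps + / INR (S n))).
    + intro n; destruct (Hp n) as [[H1 H2] _]; lra.
    + apply is_lim_seq_const.
    + replace (Finite eps) with (Rbar_plus eps 0) by (simpl; f_equal; ring).
      exact (is_lim_seq_plus' _ _ _ _ (is_lim_seq_const eps) is_lim_seq_inv_S).
  - intro n; destruct (Hp n) as [[H1 _] H3]; split; [exact H3|].
    apply T_contractive, dist_pos_neq; lra.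
Qed.

End CJMPFailure.

(* F and phi are only meaningful on (0,oo); they are modelled as total
   functions R -> R whose values on (-oo,0] are irrelevant. *)
Theorem mainTheorem6 (X : Type) (d : X -> X -> R) (F phi : R -> R) (T : X -> X) :
  is_metric d ->
  complete_metric d ->
  (forall t, 0 < t -> exists L : R, filterlim F (at_right t) (locally L)) ->
  (forall t, 0 < t -> 0 < phi t) ->
  (forall (t : R) (tn : nat -> R), 0 < t -> (forall n, t < tn n) ->
      is_lim_seq tn t -> Rbar_lt 0 (LimSup_seq (fun n => phi (tn n)))) ->
  contractive d T ->
  (forall x y, T x <> T y -> phi (d x y) + F (d (T x) (T y)) <= F (d x y)) ->
  CJMP_contraction d T.
Proof.
  intros Hm _ HF _ Hphi_limsup Hc HT; split; [exact Hc|].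
  intros eps Heps; apply NNPP; intro Hno.
  destruct (not_CJMP_at_seq X d T Hm Hc eps Heps Hno) as (x & y & Ht & Hst).
  set (t := fun n => d (x n) (y n)) in *.
  set (s := fun n => d (T (x n)) (T (y n))).
  assert (Hs_gt : forall n, eps < s n) by (intro n; apply Hst).
  assert (Ht_gt : forall n, eps < t n) by (intro n; destruct (Hst n); unfold t; lra).
  assert (Hs : is_lim_seq s eps).
  { apply (is_lim_seq_le_le (fun _ => eps) _ t); [|apply is_lim_seq_const|exact Ht].
    intro n; destruct (Hst n); unfold s, t; lra. }
  assert (Hphi_le : forall n, phi (t n) <= F (t n) - F (s n)).
  { intro n.
    assert (HTxy : T (x n) <> T (y n)).
    { apply (dist_pos_neq X d Hm), (Rlt_trans _ eps); [exact Heps|apply Hs_gt]. }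
    pose proof (HT _ _ HTxy); unfold t, s; lra. }
  destruct (HF eps Heps) as [L HL].
  apply (Rbar_lt_not_le _ _ (Hphi_limsup eps t Heps Ht_gt Ht)).
  apply (LimSup_seq_le_lim _ _ _ Hphi_le).
  exact (is_lim_seq_diff_at_right F eps L t s HL Ht Ht_gt Hs Hs_gt).
Qed.
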